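(* Let $H$ be a finite field, $\mathbb{F}$ an extension of $H$ of degree $m$, $n=|\mathbb{F}|$, $d<n$, $\delta=1-d/n\ge3/4$, and $0<\rho\le\delta/8$. Let $f\colon\mathbb{F}^m\to\mathbb{F}$ and $x\in\mathbb{F}^m$ with $f(x)\neq0$, and let $R\ge1$. Run the $R$-step $H$-plane-line random walk from $x$, and fix $h_0,h'_0$ (hence $P_0$) such that $\mathrm{dist}_{\{(0,0)\}}(f|_{P_0},\mathrm{RM}_{\mathbb{F}}(2,d))<\rho$. For $i\in[R]$ let $F_i$ be the event that $N(\ell_i)\ge2\rho n$ and $N(P_i)\ge(\delta-2\rho)n^2$, let $E_i$ be the event that $N(\ell_i)\ge2\rho n$ and $N(P_i)<(\delta-2\rho)n^2$, and let $\epsilon_i=\Pr[F_1\wedge\dots\wedge F_{i-1}\wedge E_i]$. Then, with all probabilities taken over the remaining randomness of the walk (with $P_0$ fixed), \[ \Pr[F_1\wedge\dots\wedge F_R]\ge\Big(1-\frac4n\Big)^R-\sum_{i=1}^R\epsilon_i. \]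
   Context: $\mathrm{RM}_{\mathbb{F}}(2,d)$ is the set of evaluation tables $\mathbb{F}^2\to\mathbb{F}$ of bivariate polynomials of total degree at most $d$. For $a,h,h'\in\mathbb{F}^m$, the plane $P=(a,h,h')$ has restriction $f|_P\colon\mathbb{F}^2\to\mathbb{F}$, $(t,s)\mapsto f(a+th+sh')$, and $N(P)=|\{(t,s)\in\mathbb{F}^2: f|_P(t,s)\ne0\}|$. For a line $\ell=\{b+tu:t\in\mathbb{F}\}$ (given by $b,u$), $N(\ell)=|\{t\in\mathbb{F}:f(b+tu)\ne0\}|$. Weighted distance: for strings $u,v$ indexed by $I$ with $|I|=N$ and $\emptyset\ne A\subseteq I$, $\mathrm{dist}_A(u,v)=\frac{|\{i\in A:u_i\ne v_i\}|}{2|A|}+\frac{|\{i\in I:u_i\ne v_i\}|}{2N}$, $\mathrm{dist}_A(u,S)=\min_{v\in S}\mathrm{dist}_A(u,v)$. The $R$-step $H$-plane-line random walk from $x$: set $x_0=x$, choose $h_0,h_0'\in H^m$ uniformly, $P_0=(x_0,h_0,h_0')$. For $i=1,\dots,R$: choose $s_{i-1},s'_{i-1},t_{i-1},t'_{i-1}\in\mathbb{F}$ uniformly, set $x_i=x_{i-1}+s_{i-1}h_{i-1}+s'_{i-1}h'_{i-1}$, $h_i=t_{i-1}h_{i-1}+t'_{i-1}h'_{i-1}$, the line $\ell_i=\{x_i+th_i:t\in\mathbb{F}\}$, choose $h'_i\in H^m$ uniformly, and set $P_i=(x_i,h_i,h'_i)$. All random choices are independent. *)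

From HB Require Import structures.
From mathcomp Require Import all_boot all_order all_algebra.
Set Implicit Arguments. Unset Strict Implicit. Unset Printing Implicit Defensive.
Import Order.TTheory GRing.Theory Num.Theory.
Local Open Scope ring_scope.

Section PlaneLineWalk.
Variable F : finFieldType.

Definition is_subfield (H : {set F}) : Prop :=
  [/\ 1 \in H,
      {in H &, forall a b, a - b \in H},
      {in H &, forall a b, a * b \in H} &
      {in H, forall a, a^-1 \in H}].

(* F is an extension of H of degree m: for a finite subfield this is |F| = |H|^m. *)
Definition ext_degree (H : {set F}) (m : nat) : Prop :=
  is_subfield H /\ #|[set: F]| = (#|H| ^ m)%N.

Definition inHm (m : nat) (H : {set F}) (h : 'rV[F]_m) : bool :=
  [forall j, h 0 j \in H].

(* RM_F(2,d): evaluation tables of bivariate polynomials of total degree <= d *)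
Definition inRM2 (d : nat) (g : F * F -> F) : Prop :=
  exists c : 'I_d.+1 -> 'I_d.+1 -> F,
    (forall i j : 'I_d.+1, (d < i + j)%N -> c i j = 0) /\
    forall p : F * F,
      g p = \sum_(i < d.+1) \sum_(j < d.+1) c i j * p.1 ^+ i * p.2 ^+ j.

Definition distA (A : {set F * F}) (u v : F * F -> F) : rat :=
  (#|[set i in A | u i != v i]|%:R / (2 * #|A|%:R))
  + (#|[set i : F * F | u i != v i]|%:R / (2 * #|[set: F * F]|%:R)).

Definition distA_RM_lt (A : {set F * F}) (u : F * F -> F) (d : nat) (r : rat) : Prop :=
  exists2 v, inRM2 d v & distA A u v < r.

Definition plane_restr (m : nat) (f : 'rV[F]_m -> F) (a h h' : 'rV[F]_m) :
  F * F -> F := fun p => f (a + p.1 *: h + p.2 *: h').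

Definition Nplane (m : nat) (f : 'rV[F]_m -> F) (a h h' : 'rV[F]_m) : nat :=
  #|[set p : F * F | plane_restr f a h h' p != 0]|.

Definition Nline (m : nat) (f : 'rV[F]_m -> F) (b u : 'rV[F]_m) : nat :=
  #|[set t : F | f (b + t *: u) != 0]|.

(* the random choices of step i: (s_{i-1}, s'_{i-1}, t_{i-1}, t'_{i-1}, h'_i) *)
Definition choice_t (m : nat) := (F * F * F * F * 'rV[F]_m)%type.

Definition walk_step (m : nat) (st : 'rV[F]_m * 'rV[F]_m * 'rV[F]_m)
  (c : choice_t m) : 'rV[F]_m * 'rV[F]_m * 'rV[F]_m :=
  let: (x, h, h') := st in
  let: (s, s', t, t', hn) := c in
  (x + s *: h + s' *: h', t *: h + t' *: h', hn).

Fixpoint walk (m : nat) (x h0 h0' : 'rV[F]_m) (w : nat -> choice_t m) (i : nat)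
  : 'rV[F]_m * 'rV[F]_m * 'rV[F]_m :=
  match i with
  | 0 => (x, h0, h0')
  | i'.+1 => walk_step (walk x h0 h0' w i') (w i')
  end.

Definition choice_dflt (m : nat) : choice_t m := (0, 0, 0, 0, 0).

Definition seq_of_ffun (m R : nat) (w : {ffun 'I_R -> choice_t m}) :
  nat -> choice_t m :=
  fun i => match (insub i : option 'I_R) with
           | Some j => w j
           | None => choice_dflt m
           end.

(* sample space of the remaining randomness (P_0 fixed), uniform *)
Definition Omega (m : nat) (H : {set F}) (R : nat) :
  {set {ffun 'I_R -> choice_t m}} :=
  [set w : {ffun 'I_R -> choice_t m} | [forall j, inHm H (w j).2]].

Definition Pr (m : nat) (H : {set F}) (R : nat)
  (A : {ffun 'I_R -> choice_t m} -> bool) : rat :=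
  #|[set w in Omega m H R | A w]|%:R / #|Omega m H R|%:R.

Section Events.
Variables (m R d : nat) (rho : rat) (f : 'rV[F]_m -> F) (x h0 h0' : 'rV[F]_m).

Definition n_F : rat := #|[set: F]|%:R.
Definition delta_of : rat := 1 - d%:R / n_F.

Definition walk_at (w : {ffun 'I_R -> choice_t m}) (i : nat) :=
  walk x h0 h0' (seq_of_ffun w) i.

Definition Fev (w : {ffun 'I_R -> choice_t m}) (i : nat) : bool :=
  let: (xi, hi, hi') := walk_at w i in
  (2 * rho * n_F <= (Nline f xi hi)%:R) &&
  ((delta_of - 2 * rho) * n_F ^+ 2 <= (Nplane f xi hi hi')%:R).

Definition Eev (w : {ffun 'I_R -> choice_t m}) (i : nat) : bool :=
  let: (xi, hi, hi') := walk_at w i in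
  (2 * rho * n_F <= (Nline f xi hi)%:R) &&
  ((Nplane f xi hi hi')%:R < (delta_of - 2 * rho) * n_F ^+ 2).

End Events.
End PlaneLineWalk.

From Pilot Require Import Defs.
From HB Require Import structures.
From mathcomp Require Import all_boot all_order all_algebra.
From mathcomp Require Import ring lra zify.
Import Order.TTheory GRing.Theory Num.Theory.
Local Open Scope ring_scope.
Set Implicit Arguments. Unset Strict Implicit. Unset Printing Implicit Defensive.

(* The proof is
   a step-by-step conditioning argument:

   - A plane [P] is "dense" ([dense_bound]) when [f|_P] has few zeros.  [P_0] is
     dense by the distance hypothesis and a Schwartz-Zippel count
     ([dense_start]); [P_i] is dense on the event [F_i] ([Fev_dense]).
   - The line [l_(i+1)] is a uniformly random line of [P_i].  By a second-moment
     (Chebyshev) estimate on the number of nonzeros on a random line of a plane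
     ([chebyshev_lines]), in a dense plane at most a proportion [bad_rate] of
     the lines are sparse ([bad_lines_bound]); [bad_rate] is [4 / n] except for
     [n <= 3], where [1 - 4 / n < 0] forces a sharper count.
   - Resampling the [i]-th choice of the walk ([count_step]) therefore gives
     [Pr[F_1..F_(i+1)] >= (1 - bad_rate) Pr[F_1..F_i] - eps_(i+1)]
     ([Pr_step]), and unrolling this recursion ([unroll_recursion]) yields the
     theorem. *)

Definition indR {K : pzSemiRingType} (b : bool) : K := (b : nat)%:R.

Lemma indR_ge0 (K : numDomainType) (b : bool) : 0 <= indR b :> K.
Proof. exact: ler0n. Qed.

Lemma indR_and (K : pzSemiRingType) (a b : bool) :
  indR a * indR b = indR (a && b) :> K.
Proof. by case: a; case: b; rewrite /indR ?mulr1 ?mulr0. Qed.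

Lemma card_set_sum (K : pzSemiRingType) (T : finType) (P : pred T) :
  (#|[set x | P x]|%:R : K) = \sum_x indR (P x).
Proof.
rewrite -sum1_card natr_sum big_mkcond /=; apply: eq_bigr => y _.
by rewrite inE; case: (P y).
Qed.

Lemma card_field_ge2 (F : finFieldType) : (2 <= #|F|)%N.
Proof.
have : [set (0 : F); 1] \subset [set: F] by apply/subsetP => y; rewrite !inE.
by move/subset_leq_card; rewrite cards2 eq_sym oner_eq0 cardsT.
Qed.

Lemma card_field_gt0 (F : finFieldType) (K : numDomainType) : 0 < #|F|%:R :> K.
Proof. by rewrite ltr0n; apply/card_gt0P; exists 0. Qed.

Section LineMoments.
Variables (F : finFieldType) (K : realFieldType) (g : pred (F * F)).
Local Notation n := (#|F|%:R : K).

Definition line_pt (p q : F * F) (u : F) : F * F := (p.1 + u * q.1, p.2 + u * q.2).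

Definition line_count (p q : F * F) : K := \sum_u indR (g (line_pt p q u)).

Let N : K := \sum_p indR (g p).

(* For fixed [u], the point [p + u q] of a random line is uniform in [F^2]. *)
Lemma sum_line_pt (G : F * F -> K) (u : F) :
  \sum_p \sum_q G (line_pt p q u) = n ^+ 2 * \sum_p G p.
Proof.
rewrite exchange_big /= (eq_bigr (fun _ => \sum_p G p)); last first.
  move=> q _; rewrite [RHS](reindex_inj (addIr (u * q.1, u * q.2))).
  by apply: eq_bigr => -[].
by rewrite sumr_const card_prod -[_ *+ _]mulr_natl natrM expr2.
Qed.

(* For [u != v], the points [p + u q] and [p + v q] are independent. *)
Lemma sum_line_pt2 (G G' : F * F -> K) (u v : F) : u != v ->
  \sum_p \sum_q G (line_pt p q u) * G' (line_pt p q v)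
  = (\sum_p G p) * (\sum_p G' p).
Proof.
move=> neq_uv; rewrite mulr_suml; under [RHS]eq_bigr => p _ do rewrite mulr_sumr.
rewrite !pair_big /=.
have inj_pts : injective (fun pq : (F * F) * (F * F) =>
    (line_pt pq.1 pq.2 u, line_pt pq.1 pq.2 v)).
  move=> [[p1 p2] [q1 q2]] [[p1' p2'] [q1' q2']] /= [e1 e2 e3 e4].
  have diff (a b a' b' : F) : a + u * b = a' + u * b' -> a + v * b = a' + v * b' ->
      b = b' /\ a = a'.
    move=> eu ev; have eb : (u - v) * (b - b') = 0.
      by transitivity ((a + u * b - (a' + u * b')) - (a + v * b - (a' + v * b')));
        [ring | rewrite eu ev !subrr].
    move/eqP: eb; rewrite mulf_eq0 !subr_eq0 (negbTE neq_uv) /= => /eqP eb.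
    by split=> //; subst b'; move/addIr: eu.
  by have [-> ->] := diff _ _ _ _ e1 e3; have [-> ->] := diff _ _ _ _ e2 e4.
by rewrite [RHS](reindex_inj inj_pts).
Qed.

Lemma sum_lines_swap (X : F -> F * F -> F * F -> K) :
  \sum_p \sum_q \sum_u X u p q = \sum_u \sum_p \sum_q X u p q.
Proof. by under eq_bigr => p _ do rewrite exchange_big; rewrite exchange_big. Qed.

Lemma line_count_sum : \sum_p \sum_q line_count p q = n ^+ 3 * N.
Proof.
rewrite /line_count (sum_lines_swap (fun u p q => indR (g (line_pt p q u)))).
under eq_bigr => u _ do rewrite (sum_line_pt (fun pq => indR (g pq))).
by rewrite sumr_const -[_ *+ _]mulr_natl mulrA -exprS.
Qed.

(* Second moment: two distinct points of a random line are independent. *)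
Lemma line_count_sum2 :
  \sum_p \sum_q line_count p q ^+ 2 = n * (n ^+ 2 * N + (n - 1) * N ^+ 2).
Proof.
rewrite /line_count.
under eq_bigr => p _ do under eq_bigr => q _ do rewrite expr2 mulr_suml.
under eq_bigr => p _ do under eq_bigr => q _ do under eq_bigr => u _ do rewrite mulr_sumr.
rewrite (sum_lines_swap (fun u p q => \sum_v _)).
transitivity (\sum_(u : F) (n ^+ 2 * N + (n - 1) * N ^+ 2));
  last by rewrite sumr_const mulr_natl.
apply: eq_bigr => u _.
under eq_bigr => p _ do rewrite exchange_big.
rewrite exchange_big (bigD1 u) //=; congr (_ + _).
  under eq_bigr => p _ do under eq_bigr => q _ do rewrite indR_and andbb.
  by rewrite (sum_line_pt (fun pq => indR (g pq))).
rewrite (eq_bigr (fun _ => N ^+ 2)); last first.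
  move=> v; rewrite eq_sym => neq_uv.
  by rewrite (sum_line_pt2 (fun pq => indR (g pq)) (fun pq => indR (g pq))) // expr2.
rewrite sumr_const -[LHS]mulr_natl; congr (_ * _).
have -> : #|(fun v : F => v != u)| = #|F|.-1 by rewrite -(cardC1 u); apply: eq_card.
by rewrite -subn1 natrB //; apply/card_gt0P; exists u.
Qed.

Lemma line_count_var :
  \sum_p \sum_q (line_count p q - N / n) ^+ 2 = n * N * (n ^+ 2 - N).
Proof.
have n_neq0 : n != 0 by rewrite gt_eqF // card_field_gt0.
under eq_bigr => p _ do under eq_bigr => q _ do rewrite sqrrB.
under eq_bigr => p _ do rewrite big_split sumrB /= sumrMnl -mulr_suml.
rewrite big_split sumrB /= sumrMnl -mulr_suml line_count_sum2 line_count_sum.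
have mulrn_card2 (x : K) : x *+ (#|F| * #|F|) = x * n ^+ 2.
  by rewrite expr2 -natrM mulr_natr.
rewrite !sumr_const card_prod !mulrn_card2.
(* [field] on the abstracted [n] and [N], without unfolding them *)
by move: n_neq0 (N) => /[swap] N'; move: (n) => n' ?; field.
Qed.

Lemma chebyshev_lines (th : K) : th <= N / n ->
  (\sum_p \sum_q indR (line_count p q < th)) * (N / n - th) ^+ 2
  <= n * N * (n ^+ 2 - N).
Proof.
move=> th_le; rewrite -line_count_var mulr_suml; apply: ler_sum => p _.
rewrite mulr_suml; apply: ler_sum => q _.
case: (boolP (line_count p q < th)) => [lt_th|_]; last by rewrite mul0r sqr_ge0.
rewrite mul1r -[X in _ <= X]sqrrN opprB ler_pXn2r // ?nnegrE; lra.
Qed.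

Lemma bad_lines_gap (th gm : K) : 0 < gm -> gm <= N / n - th ->
  \sum_p \sum_q indR (line_count p q < th) <= n ^+ 5 / (4 * gm ^+ 2).
Proof.
move=> gm_gt0 gm_le; set B := \sum_p _.
have B_ge0 : 0 <= B by do 2![apply: sumr_ge0 => ? _]; apply: indR_ge0.
have cheb : B * (N / n - th) ^+ 2 <= n * N * (n ^+ 2 - N).
  by apply: chebyshev_lines; rewrite -/N; lra.
have amgm : n * N * (n ^+ 2 - N) <= n ^+ 5 / 4.
  have n_ge0 : 0 <= n by exact: ler0n.
  have : 0 <= n * (n ^+ 2 / 2 - N) ^+ 2 by rewrite mulr_ge0 ?sqr_ge0.
  suff -> : n * (n ^+ 2 / 2 - N) ^+ 2 = n ^+ 5 / 4 - n * N * (n ^+ 2 - N) by lra.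
  by rewrite !exprS expr0; field.
have gap2 : gm ^+ 2 <= (N / n - th) ^+ 2 by rewrite ler_pXn2r // ?nnegrE; lra.
have : B * gm ^+ 2 <= B * (N / n - th) ^+ 2 by exact: ler_wpM2l.
rewrite ler_pdivlMr ?mulr_gt0 ?exprn_gt0 //; lra.
Qed.
End LineMoments.
Arguments line_count {F K} g p q.

Section DenseGap.
Variables (K : realFieldType) (n d rho N : K).

(* The density condition on a plane with [N] nonzero points that both the
   distance hypothesis on [P_0] and the events [F_i] provide. *)
Definition dense_bound : Prop :=
  (n - 1) * (n ^+ 2 - 2 * rho * n ^+ 2 - N) <= n ^+ 2 * d.

Lemma dense_gap : 3 <= n -> 0 <= d -> 4 * d <= n -> 8 * rho * n <= n - d ->
  dense_bound -> n / 4 <= N / n - 2 * rho * n.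
Proof.
move=> n_ge3 d_ge0 d_le rho_le dense.
have n_gt0 : 0 < n by lra.
have rho_n2 : 4 * rho * n ^+ 2 <= n * (n - d) / 2.
  by rewrite expr2; move: (ler_wpM2r (ltW n_gt0) rho_le); lra.
have nd_le : n ^+ 2 * d <= (n - 1) * (n ^+ 2 / 4 + n * d / 2).
  by rewrite expr2; nra.
have : (n - 1) * (n ^+ 2 - 2 * rho * n ^+ 2 - N)
       <= (n - 1) * (3 / 4 * n ^+ 2 - 4 * rho * n ^+ 2).
  apply: (le_trans dense); apply: (le_trans nd_le); apply: ler_wpM2l; lra.
rewrite ler_pM2l; last lra.
move=> N_ge; rewrite lerBrDr ler_pdivlMr //.
suff -> : (n / 4 + 2 * rho * n) * n = n ^+ 2 / 4 + 2 * rho * n ^+ 2 by lra.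
by rewrite expr2; field.
Qed.

Lemma dense_gap0 : 1 < n -> 8 * rho <= 1 -> d = 0 -> dense_bound ->
  n / 2 <= N / n - 2 * rho * n.
Proof.
move=> n_gt1 rho_le d0; rewrite /dense_bound d0.
have n_gt0 : 0 < n by lra.
rewrite mulr0 pmulr_rle0 ?subr_gt0 // subr_le0 => N_ge.
rewrite lerBrDr ler_pdivlMr //.
have : rho * n ^+ 2 <= n ^+ 2 / 8 by rewrite ler_pdivlMr ?exprn_gt0 //; nra.
suff -> : (n / 2 + 2 * rho * n) * n = n ^+ 2 / 2 + 2 * rho * n ^+ 2 by lra.
by rewrite expr2; field.
Qed.
End DenseGap.

Section PlaneLines.
Variables (F : finFieldType) (m : nat) (f : 'rV[F]_m -> F).
Implicit Types a h : 'rV[F]_m.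

Definition plane_nz a h h' : pred (F * F) := fun p => plane_restr f a h h' p != 0.

(* [N(l_{i+1})] as a function of [P_i = (a, h, h')] and of [(s, s', t, t')]. *)
Definition next_line_count a h h' (c : F * F * F * F) : nat :=
  let: (s, s', t, t') := c in Nline f (a + s *: h + s' *: h') (t *: h + t' *: h').

Lemma Nplane_sum a h h' :
  (Nplane f a h h')%:R = \sum_p indR (plane_nz a h h' p) :> rat.
Proof. exact: card_set_sum. Qed.

Lemma next_line_countE a h h' s s' t t' :
  (next_line_count a h h' (s, s', t, t'))%:R
  = line_count (plane_nz a h h') (s, s') (t, t') :> rat.
Proof.
rewrite /= /Nline card_set_sum; apply: eq_bigr => u _.
rewrite /plane_nz /plane_restr /line_pt /= scalerDr !scalerA !scalerDl.
by congr (indR (f _ != 0)); rewrite -!addrA; congr (_ + (_ + _)); exact: addrCA.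
Qed.

Lemma sparse_next_lines a h h' (th : rat) :
  \sum_c indR ((next_line_count a h h' c)%:R < th)
  = \sum_p \sum_q indR (line_count (plane_nz a h h') p q < th) :> rat.
Proof.
pose pack (pq : (F * F) * (F * F)) := (pq.1.1, pq.1.2, pq.2.1, pq.2.2).
pose unpack (c : F * F * F * F) := ((c.1.1.1, c.1.1.2), (c.1.2, c.2)).
rewrite (reindex pack) ?pair_big /=; last by exists unpack => [[[? ?] [? ?]]|[[[? ?] ?] ?]].
by apply: eq_bigr => -[[p1 p2] [q1 q2]] _; rewrite next_line_countE.
Qed.
End PlaneLines.

(* In dimension 1 the two directions of a plane are dependent, so a zero of
   [f|_P] lies on a whole line of zeros of [f|_P]. *)
Lemma plane_dim1_full (F : finFieldType) (f : 'rV[F]_1 -> F) (a h h' : 'rV[F]_1) :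
  (#|F| * #|F| - #|F| < Nplane f a h h')%N -> forall p, plane_nz f a h h' p.
Proof.
move=> N_gt p; apply: contraTT N_gt => zero_p; rewrite -leqNgt.
have [e e_neq0 e_ker] : exists2 e : F * F, e != 0 & e.1 *: h + e.2 *: h' = 0.
  have [h00|h00] := eqVneq (h 0 0) 0.
    exists (1, 0); first by rewrite -pair_eqE /= oner_eq0.
    by apply/rowP => j; rewrite ord1 !mxE /= h00 mulr0 mul0r addr0.
  exists (- h' 0 0 / h 0 0, 1); first by rewrite -pair_eqE /= oner_eq0 andbF.
  by apply/rowP => j; rewrite ord1 !mxE /=; field.
have line_inj : injective (line_pt p e).
  case: e e_neq0 {e_ker} => e1 e2 e_neq0 u v [/addrI eu1 /addrI eu2].
  have [e1_0|e1_neq0] := eqVneq e1 0; last exact: mulIf eu1.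
  have e2_neq0 : e2 != 0 by apply: contraNneq e_neq0 => e2_0; rewrite e1_0 e2_0.
  exact: mulIf eu2.
have zeros :
    [set line_pt p e u | u : F] \subset ~: [set q | plane_restr f a h h' q != 0].
  apply/subsetP => _ /imsetP [u _ ->]; rewrite !inE negbK /plane_restr.
  have -> : a + (p.1 + u * e.1) *: h + (p.2 + u * e.2) *: h'
            = a + p.1 *: h + p.2 *: h' + u *: (e.1 *: h + e.2 *: h').
    rewrite scalerDr !scalerA !scalerDl -!addrA; congr (_ + (_ + _)); exact: addrCA.
  by rewrite e_ker scaler0 addr0; exact: negbNE zero_p.
have := subset_leq_card zeros; rewrite card_imset //.
have := cardsC [set q | plane_restr f a h h' q != 0]; rewrite card_prod /Nplane.
by move=> <- line_le; rewrite -addnBA // leq_addr.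
Qed.

Section FieldFacts.
Variable F : finFieldType.

Lemma n_F_card : n_F F = #|F|%:R.
Proof. by rewrite /n_F cardsT. Qed.

Lemma subfield0 (H : {set F}) : is_subfield H -> 0 \in H.
Proof. by case=> H1 HB _ _; rewrite -(subrr 1) HB. Qed.

Lemma ext_degree_card2 (H : {set F}) m : ext_degree H m -> #|F| = 2%N -> m = 1%N.
Proof.
case=> subH; rewrite cardsT => cardH card2.
have H01 : [set 0; 1] \subset H.
  by apply/subsetP => y; rewrite !inE => /orP[] /eqP ->; [exact: subfield0 | case: subH].
have H2 : #|H| = 2%N.
  apply/eqP; rewrite eqn_leq -{1}card2 max_card /=.
  by move/subset_leq_card: H01; rewrite cards2 eq_sym oner_eq0.
apply/eqP; rewrite -(eqn_exp2l m 1 (ltnSn 1)).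
by rewrite -H2 -cardH card2 H2.
Qed.

Lemma delta_bounds (d : nat) (rho : rat) :
  3%:R / 4%:R <= delta_of F d -> rho <= delta_of F d / 8%:R ->
  4 * d%:R <= #|F|%:R :> rat /\ 8 * rho * #|F|%:R <= #|F|%:R - d%:R.
Proof.
rewrite /delta_of n_F_card; set n : rat := #|F|%:R => delta_ge rho_le.
have n_gt0 : 0 < n := card_field_gt0 F rat.
split.
  have : d%:R / n <= 1 / 4 by lra.
  by rewrite ler_pdivrMr //; lra.
have : 8 * rho <= 1 - d%:R / n by lra.
rewrite -(ler_pM2r n_gt0) mulrBl mul1r mulfVK ?gt_eqF //.
Qed.
End FieldFacts.

(* Over the two-element field, a plane with more than two nonzeros of [f]
   has no zero at all (by [plane_dim1_full], as [m = 1]), so every line of it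
   is full. *)
Lemma no_sparse_lines_card2 (F : finFieldType) (H : {set F}) m (f : 'rV[F]_m -> F)
    (a h h' : 'rV[F]_m) (th : rat) :
  ext_degree H m -> #|F| = 2%N -> (2 < Nplane f a h h')%N -> th <= #|F|%:R ->
  \sum_p \sum_q indR (line_count (plane_nz f a h h') p q < th) = 0 :> rat.
Proof.
move=> ext n2 N_gt th_le; have m1 := ext_degree_card2 ext n2; subst m.
have full : forall p, plane_nz f a h h' p by apply: plane_dim1_full; rewrite n2.
rewrite big1 // => p _; rewrite big1 // => q _.
rewrite /line_count (eq_bigr (fun _ => 1)) => [|u _]; last by rewrite full.
by rewrite sumr_const ltNge th_le.
Qed.

Definition bad_rate (F : finFieldType) : rat :=
  if #|F| == 2%N then 0 else if #|F| == 3%N then 1 / 3%:R else 4 / #|F|%:R.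

Lemma bad_lines_bound (F : finFieldType) (H : {set F}) m (f : 'rV[F]_m -> F)
    d rho (a h h' : 'rV[F]_m) :
  ext_degree H m -> 3%:R / 4%:R <= delta_of F d -> 0 < rho ->
  rho <= delta_of F d / 8%:R ->
  dense_bound #|F|%:R d%:R rho (Nplane f a h h')%:R ->
  \sum_c indR ((next_line_count f a h h' c)%:R < 2 * rho * n_F F)
  <= bad_rate F * #|F|%:R ^+ 4.
Proof.
move=> ext delta_ge rho_gt0 rho_le dense.
have [d_le rho_n_le] := delta_bounds delta_ge rho_le.
have d0 : (#|F| <= 3)%N -> d = 0%N.
  by move=> n_le3; move: d_le; rewrite -natrM ler_nat; lia.
have n_ge2 := card_field_ge2 F.
rewrite n_F_card sparse_next_lines /bad_rate.
move: dense; rewrite -[X in dense_bound _ _ _ X]/((Nplane f a h h')%:R) Nplane_sum.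
set N := \sum_p indR (plane_nz f a h h' p); set n : rat := #|F|%:R => dense.
have n_gt0 : 0 < n := card_field_gt0 F rat.
have rho_le1 : 8 * rho <= 1 by rewrite -(ler_pM2r n_gt0) mul1r; move: (ler0n rat d); lra.
have [n2|n_neq2] := eqVneq #|F| 2%N.
  (* [n = 2], so [d = 0]: the plane has at least three nonzeros *)
  rewrite mul0r (no_sparse_lines_card2 ext n2) //.
    rewrite -(ltr_nat rat) Nplane_sum -/N.
    have : n / 2 <= N / n - 2 * rho * n.
      by apply: dense_gap0 rho_le1 _ dense; [rewrite /n n2 | rewrite d0 ?n2].
    by rewrite /n n2; lra.
  by rewrite -/n -(ler_pM2r n_gt0) mul1r in rho_le1; lra.
have [n3|n_neq3] := eqVneq #|F| 3%N.
  (* [n = 3], so [d = 0]: gap [n / 2], at most [n^3] sparse lines *)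
  have gap : n / 2 <= N / n - 2 * rho * n.
    by apply: dense_gap0 rho_le1 _ dense; [rewrite /n n3 | rewrite d0 ?n3].
  apply: le_trans (bad_lines_gap _ gap) _; first by rewrite divr_gt0.
  by rewrite /n n3 -subr_ge0 (_ : _ - _ = 0) //; field.
(* [n >= 4]: gap [n / 4], at most [4 n^3] sparse lines *)
have gap : n / 4 <= N / n - 2 * rho * n.
  by apply: dense_gap dense; rewrite ?ler0n // /n ler_nat; lia.
apply: le_trans (bad_lines_gap _ gap) _; first by rewrite divr_gt0.
by rewrite -/n -subr_ge0 (_ : _ - _ = 0) //; field; rewrite gt_eqF.
Qed.

(* A weak Schwartz-Zippel bound: a bivariate polynomial of total degree [<= d]
   with nonzero constant term has at most [d] zeros on every line through the
   origin, hence at most [n ^ 2 d / (n - 1)] zeros in [F ^ 2]. *)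
Section SchwartzZippel.
Variables (F : finFieldType) (d : nat) (c : 'I_d.+1 -> 'I_d.+1 -> F).
Hypothesis c_deg : forall i j : 'I_d.+1, (d < i + j)%N -> c i j = 0.
Hypothesis c00 : c ord0 ord0 != 0.
Variable v : F * F -> F.
Hypothesis vE : forall p, v p = \sum_(i < d.+1) \sum_(j < d.+1) c i j * p.1 ^+ i * p.2 ^+ j.

Definition ray_poly (u : F * F) : {poly F} :=
  \sum_(i < d.+1) \sum_(j < d.+1) (c i j * u.1 ^+ i * u.2 ^+ j) *: 'X^(i + j).

Lemma ray_polyE u t : (ray_poly u).[t] = v (t * u.1, t * u.2).
Proof.
rewrite vE /ray_poly horner_sum; apply: eq_bigr => i _.
rewrite horner_sum; apply: eq_bigr => j _.
by rewrite hornerZ hornerXn !exprMn exprD; ring.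
Qed.

Lemma ray_poly_size u : (size (ray_poly u) <= d.+1)%N.
Proof.
apply/leq_sizeP => k k_gt; rewrite coef_sum big1 // => i _.
rewrite coef_sum big1 // => j _; rewrite coefZ coefXn.
by case: eqP => [k_eq|]; [rewrite c_deg ?mul0r // -k_eq | rewrite mulr0].
Qed.

Lemma v_origin : v (0, 0) = c ord0 ord0.
Proof.
have ord_neq0 (i : 'I_d.+1) : i != ord0 -> (i == 0 :> nat) = false by move/negbTE.
rewrite vE (bigD1 ord0) //= [X in _ + X]big1 ?addr0 => [|i /ord_neq0 i0]; last first.
  by apply: big1 => j _; rewrite [0 ^+ i]expr0n i0 mulr0 mul0r.
rewrite (bigD1 ord0) //= big1 ?addr0 => [|j /ord_neq0 j0]; last first.
  by rewrite [0 ^+ j]expr0n j0 mulr0.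
by rewrite !expr0 !mulr1.
Qed.

Lemma ray_zeros (u : F * F) : (#|[set t | (v (t * u.1, t * u.2) == 0)%R]| <= d)%N.
Proof.
have ray_neq0 : ray_poly u != 0.
  apply: contraNneq c00 => ray0; rewrite -v_origin.
  by have := ray_polyE u 0; rewrite ray0 horner0 !mul0r => <-.
have := max_poly_roots ray_neq0 (rs := enum [set t | v (t * u.1, t * u.2) == 0]).
rewrite enum_uniq -cardE => /(_ _ isT) roots_lt.
rewrite -ltnS; apply: leq_trans (ray_poly_size u); apply: roots_lt.
by apply/allP => t; rewrite mem_enum inE /root ray_polyE.
Qed.

(* Counting the pairs [(u, t)] with [v (t u) = 0] in two ways: at most [d]
   for each [u], and [#|zeros of v|] for each [t != 0]. *)
Lemma zeros_bound (K : numDomainType) :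
  (#|F|%:R - 1) * #|[set p | v p == 0]|%:R <= #|F|%:R ^+ 2 * d%:R :> K.
Proof.
set Z := #|[set p | v p == 0]|.
pose L : K := \sum_(u : F * F) \sum_(t : F) indR (v (t * u.1, t * u.2) == 0).
have L_le : L <= #|F|%:R ^+ 2 * d%:R.
  apply: (@le_trans _ _ (\sum_(u : F * F) (d%:R : K))).
    by apply: ler_sum => u _; rewrite -card_set_sum ler_nat ray_zeros.
  by rewrite sumr_const card_prod -[d%:R *+ _]mulr_natr natrM expr2 mulrC.
apply: le_trans L_le; rewrite /L exchange_big /= (bigD1 0) //= -[X in X <= _]add0r.
apply: lerD; first by apply: sumr_ge0 => ? _; apply: indR_ge0.
rewrite (eq_bigr (fun _ => Z%:R)) => [|t t_neq0].
  rewrite sumr_const -[X in _ <= X]mulr_natl; apply: ler_wpM2r => //.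
  have -> : #|(fun t : F => t != 0)| = #|F|.-1 by rewrite -(cardC1 0); apply: eq_card.
  by rewrite -subn1 natrB //; apply/card_gt0P; exists 0.
have dil_inj : injective (fun u : F * F => (t * u.1, t * u.2)).
  by move=> [? ?] [? ?] [/(mulfI t_neq0) -> /(mulfI t_neq0) ->].
by rewrite card_set_sum [RHS](reindex_inj dil_inj).
Qed.
End SchwartzZippel.

Section StartPlane.
Variable F : finFieldType.
Local Notation n := (#|F|%:R : rat).

Lemma distA_origin (u v : F * F -> F) (r : rat) : r <= 1 / 2 ->
  distA [set (0, 0)] u v < r ->
  u (0, 0) = v (0, 0) /\ #|[set p | u p != v p]|%:R < 2 * r * n ^+ 2.
Proof.
rewrite /distA cards1 cardsT card_prod natrM -expr2.
set D0 := #|[set i in _ | _]|; set D := #|[set i | _]| => r_le dist_lt.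
have n_gt0 : 0 < n := card_field_gt0 F rat.
have n2_gt0 : 0 < n ^+ 2 by rewrite exprn_gt0.
have D_ge0 : 0 <= D%:R / (2 * n ^+ 2) :> rat by rewrite divr_ge0 ?mulr_ge0 ?ler0n.
split.
  apply/eqP; apply: contraTT dist_lt => neq0; rewrite -leNgt.
  have -> : D0 = 1%N.
    by rewrite -(cards1 (0 : F, 0 : F)); apply: eq_card => p; rewrite !inE andb_idr // => /eqP->.
  lra.
have : D%:R / (2 * n ^+ 2) < r by move: (ler0n rat D0); lra.
by rewrite ltr_pdivrMr ?pmulr_rgt0 //; lra.
Qed.

Lemma plane_cover (u v : F * F -> F) :
  (#|F| * #|F| <= #|[set p | (v p == 0)%R]| + #|[set p | u p != v p]|
                  + #|[set p | (u p != 0)%R]|)%N.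
Proof.
rewrite -card_prod -cardsT.
apply: leq_trans (leq_trans (leq_card_setU _ _) (leq_add (leq_card_setU _ _) (leqnn _))).
apply/subset_leq_card/subsetP => p _; rewrite !inE.
by case: (eqVneq (v p) 0) => //= v0; case: (eqVneq (u p) (v p)) => //= ->.
Qed.

(* The distance hypothesis on [P_0] makes [P_0] dense: [f|_{P_0}] agrees at
   the origin (where it is [f x != 0]) and outside fewer than [2 rho n^2]
   points with a polynomial [v] of degree [<= d], so [v] has nonzero constant
   term and every zero of [f|_{P_0}] is a zero of [v] or a disagreement. *)
Lemma dense_start (m : nat) (f : 'rV[F]_m -> F) (x h0 h0' : 'rV[F]_m) d rho :
  f x != 0 -> rho <= 1 / 8 ->
  distA_RM_lt [set (0, 0)] (plane_restr f x h0 h0') d rho ->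
  dense_bound n d%:R rho (Nplane f x h0 h0')%:R.
Proof.
move=> fx_neq0 rho_le [v [c [c_deg vE]] dist_lt].
have rho_half : rho <= 1 / 2 by lra.
have [agree0 disagree_lt] := distA_origin rho_half dist_lt.
have c00 : c ord0 ord0 != 0.
  by rewrite -(v_origin vE) -agree0 /plane_restr /= !scale0r !addr0.
have := @zeros_bound _ _ _ c_deg c00 _ vE rat.
have := plane_cover (plane_restr f x h0 h0') v; rewrite -(ler_nat rat) !natrD natrM -expr2.
rewrite /dense_bound /Nplane => cover; apply: le_trans; apply: ler_wpM2l; last lra.
by rewrite subr_ge0 ler1n; apply/card_gt0P; exists 0.
Qed.
End StartPlane.

Section Resampling.
Variables (F : finFieldType) (m R : nat) (x h0 h0' : 'rV[F]_m).
Local Notation W := {ffun 'I_R -> choice_t F m}.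
Local Notation walk_at := (walk_at x h0 h0').

Lemma walk_at_prefix (w w' : W) i :
  (forall j : 'I_R, (j < i)%N -> w j = w' j) -> walk_at w i = walk_at w' i.
Proof.
elim: i => [//|i IH] ww'; rewrite /walk_at /= -!/(walk_at _ _).
rewrite IH => [|j lt_ji]; last by apply: ww'; apply: ltnW.
by congr walk_step; rewrite /seq_of_ffun; case: insubP => // j _ ji; apply: ww'; rewrite ji.
Qed.

Lemma walk_atS (w : W) (k : 'I_R) : walk_at w k.+1 = walk_step (walk_at w k) (w k).
Proof. by rewrite /walk_at /= /seq_of_ffun valK. Qed.

Definition resample (w : W) (k : 'I_R) (c : choice_t F m) : W :=
  [ffun j => if j == k then c else w j].

Lemma resample_prefix (w : W) (k : 'I_R) c i : (i <= k)%N ->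
  walk_at (resample w k c) i = walk_at w i.
Proof.
move=> le_ik; apply: walk_at_prefix => j lt_ji; rewrite ffunE.
by case: eqP => // jk; move: lt_ji; rewrite jk ltnNge le_ik.
Qed.

Lemma resample_next (w : W) (k : 'I_R) c :
  walk_at (resample w k c) k.+1 = walk_step (walk_at w k) c.
Proof. by rewrite walk_atS resample_prefix // ffunE eqxx. Qed.

Lemma resampleK (w : W) (k : 'I_R) c : resample (resample w k c) k (w k) = w.
Proof. by apply/ffunP => j; rewrite !ffunE; case: eqP => // ->. Qed.

Lemma resample_at (w : W) (k : 'I_R) c : resample w k c k = c.
Proof. by rewrite ffunE eqxx. Qed.
End Resampling.

Section Events.
Variables (F : finFieldType) (H : {set F}) (m R d : nat) (rho : rat).
Variables (f : 'rV[F]_m -> F) (x h0 h0' : 'rV[F]_m).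
Local Notation W := {ffun 'I_R -> choice_t F m}.
Local Notation walk_at := (walk_at x h0 h0').
Local Notation Fev := (Fev d rho f x h0 h0').
Local Notation Eev := (Eev d rho f x h0 h0').
Local Notation n := (#|F|%:R : rat).

Definition all_F (k : nat) (w : W) : bool := [forall j : 'I_k, Fev w j.+1].

Definition dense_line (w : W) (i : nat) : bool :=
  let: (xi, hi, _) := walk_at w i in 2 * rho * n_F F <= (Nline f xi hi)%:R.

Lemma all_FS (w : W) k : all_F k.+1 w = all_F k w && Fev w k.+1.
Proof.
apply/forallP/andP => [all_k1|[/forallP all_k Fk1] j].
  split; last exact: (all_k1 ord_max).
  by apply/forallP => j; exact: (all_k1 (widen_ord (leqnSn k) j)).
have [lt_jk|] := ltnP j k; first exact: (all_k (Ordinal lt_jk)).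
move=> le_kj; suff -> : nat_of_ord j = k by [].
by apply/eqP; rewrite eqn_leq le_kj -ltnS ltn_ord.
Qed.

Lemma F_E_partition (b : bool) (w : W) i :
  indR (b && Fev w i) + indR (b && Eev w i) = indR (b && dense_line w i) :> rat.
Proof.
rewrite /Fev /Eev /dense_line; case: (walk_at w i) => [[xi hi] hi'].
rewrite ltNge; case: b; case: (_ <= (Nline _ _ _)%:R); case: (_ <= (Nplane _ _ _ _)%:R);
  by rewrite /indR /= ?addr0 ?add0r.
Qed.

Lemma all_F_resample (w : W) (k : 'I_R) c : all_F k (resample w k c) = all_F k w.
Proof.
apply: eq_forallb => j; rewrite /Defs.Fev -/(walk_at _ _).
by rewrite resample_prefix // ltn_ord.
Qed.

Lemma dense_line_resample (w : W) (k : 'I_R) c a h h' :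
  walk_at w k = (a, h, h') ->
  dense_line (resample w k c) k.+1
  = ~~ ((next_line_count f a h h' c.1)%:R < 2 * rho * n_F F).
Proof.
rewrite /dense_line resample_next -leNgt => ->.
by case: c => [[[[s s'] t] t'] hn].
Qed.

Lemma Fev_dense (w : W) i : Fev w i ->
  dense_bound n d%:R rho
    (Nplane f (walk_at w i).1.1 (walk_at w i).1.2 (walk_at w i).2)%:R.
Proof.
rewrite /Defs.Fev -/(walk_at _ _); case: (walk_at w i) => [[a h] h'] /andP [_] /=.
rewrite /delta_of n_F_card /dense_bound; set N := (Nplane f a h h')%:R.
have n_ge2 : 2 <= n by rewrite ler_nat card_field_ge2.
have d_ge0 : 0 <= d%:R :> rat by rewrite ler0n.
have -> : (1 - d%:R / n - 2 * rho) * n ^+ 2 = n ^+ 2 - 2 * rho * n ^+ 2 - d%:R * n.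
  by rewrite !expr2; field; rewrite gt_eqF //; lra.
move=> N_ge; apply: (le_trans (ler_wpM2l _ (_ : _ <= d%:R * n))); [lra | lra |].
rewrite expr2; nra.
Qed.

Let C : {set choice_t F m} := [set c | inHm H c.2].
Let Om := Omega m H R.

Lemma Omega_resample (w : W) (k : 'I_R) c :
  (resample w k c \in Om) && (w k \in C) = (w \in Om) && (c \in C).
Proof.
rewrite !inE; apply/andP/andP => [[/forallP Hw' Hwk]|[/forallP Hw Hc]]; split.
- apply/forallP => j; have [->//|neq_jk] := eqVneq j k.
  by have := Hw' j; rewrite ffunE (negbTE neq_jk).
- by have := Hw' k; rewrite resample_at.
- by apply/forallP => j; rewrite ffunE; case: eqP.
- exact: Hw k.
Qed.

Lemma choices_sum (G : F * F * F * F -> rat) :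
  \sum_c indR (c \in C) * G c.1 = (\sum_c4 G c4) * #|[set hn : 'rV[F]_m | inHm H hn]|%:R.
Proof.
rewrite card_set_sum mulr_suml; under [RHS]eq_bigr => c4 _ do rewrite mulr_sumr.
by rewrite pair_big /=; apply: eq_bigr => -[c4 hn] _; rewrite inE mulrC.
Qed.

(* Double counting the pairs [(w, c)] through the involution
   [(w, c) |-> (resample w k c, w k)]. *)
Lemma resample_count (k : 'I_R) :
  \sum_w \sum_c indR ((w \in Om) && all_F k w && (c \in C)
                      && dense_line (resample w k c) k.+1)
  = #|C|%:R * #|[set w in Om | all_F k w && dense_line w k.+1]|%:R :> rat.
Proof.
pose swap (wc : W * choice_t F m) := (resample wc.1 k wc.2, wc.1 k).
have swapK : involutive swap by move=> [w c]; rewrite /swap /= resampleK resample_at.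
rewrite pair_big (reindex_inj (inv_inj swapK)) !card_set_sum mulr_suml.
under [RHS]eq_bigr => c _ do rewrite mulr_sumr.
rewrite exchange_big pair_big /=; apply: eq_bigr => -[w c] _ /=.
rewrite resampleK all_F_resample indR_and; congr indR.
rewrite -[_ && all_F k w && _]andbA (andbC (all_F k w)) andbA Omega_resample.
by rewrite [c \in C]inE -!andbA andbCA.
Qed.

Lemma good_choices (w : W) (k : 'I_R) (q : rat) a h h' : walk_at w k = (a, h, h') ->
  \sum_c4 indR ((next_line_count f a h h' c4)%:R < 2 * rho * n_F F) <= q * n ^+ 4 ->
  (1 - q) * #|C|%:R <= \sum_c indR ((c \in C) && dense_line (resample w k c) k.+1).
Proof.
move=> state_k bad_le.
set bad := fun c4 => indR ((next_line_count f a h h' c4)%:R < 2 * rho * n_F F) : rat.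
have sumC : \sum_c indR (c \in C) = #|C|%:R :> rat.
  by rewrite card_set_sum; apply: eq_bigr => c _; rewrite inE.
have cardC : #|C|%:R = n ^+ 4 * #|[set hn : 'rV[F]_m | inHm H hn]|%:R :> rat.
  rewrite -sumC; under eq_bigr => c _ do rewrite -[indR _]mulr1.
  rewrite (choices_sum (fun=> 1)) sumr_const !card_prod; congr (_ * _).
  by rewrite !natrM !exprS expr0 mulr1 !mulrA.
have split_C : \sum_c indR ((c \in C) && dense_line (resample w k c) k.+1)
    + (\sum_c4 bad c4) * #|[set hn : 'rV[F]_m | inHm H hn]|%:R = #|C|%:R.
  rewrite -choices_sum -sumC -big_split; apply: eq_bigr => c _.
  rewrite (dense_line_resample _ state_k) indR_and /bad.
  by case: (c \in C); case: (_ < _).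
have : 0 <= #|[set hn : 'rV[F]_m | inHm H hn]|%:R :> rat by exact: ler0n.
nra.
Qed.

Lemma count_step (k : 'I_R) (q : rat) : inHm H (0 : 'rV[F]_m) ->
  (forall w a h h', w \in Om -> all_F k w -> walk_at w k = (a, h, h') ->
     \sum_c4 indR ((next_line_count f a h h' c4)%:R < 2 * rho * n_F F)
     <= q * n ^+ 4) ->
  (1 - q) * #|[set w in Om | all_F k w]|%:R
  <= #|[set w in Om | all_F k w && dense_line w k.+1]|%:R.
Proof.
move=> H0 bad_le.
have C_gt0 : 0 < #|C|%:R :> rat.
  by rewrite ltr0n; apply/card_gt0P; exists (choice_dflt F m); rewrite inE.
rewrite -(ler_pM2l C_gt0) -resample_count card_set_sum mulrA mulr_sumr.
apply: ler_sum => w _.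
have [OAw|] := boolP ((w \in Om) && all_F k w); last first.
  move/negbTE => nOAw; rewrite mulr0; apply: sumr_ge0 => c _; exact: indR_ge0.
under eq_bigr => c _ do rewrite andTb.
rewrite [indR true]/indR mulr1 mulrC; case/andP: OAw => Ow Aw.
case state_k : (walk_at w k) => [[a h] h'].
exact: good_choices state_k (bad_le _ _ _ _ Ow Aw state_k).
Qed.
End Events.

Lemma unroll_recursion (K : realFieldType) (q : K) (a e : nat -> K) (R : nat) :
  0 <= q <= 1 -> a 0%N = 1 -> (forall i, 0 <= e i) ->
  (forall k, (k < R)%N -> (1 - q) * a k - e k.+1 <= a k.+1) ->
  (1 - q) ^+ R - \sum_(1 <= i < R.+1) e i <= a R.
Proof.
move=> /andP [q_ge0 q_le1] a0 e_ge0 step.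
suff : forall k, (k <= R)%N -> (1 - q) ^+ k - \sum_(1 <= i < k.+1) e i <= a k by apply.
elim=> [_|k IH lt_kR]; first by rewrite big_geq // subr0 expr0 a0.
have S_ge0 : 0 <= \sum_(1 <= i < k.+1) e i by apply: sumr_ge0 => i _.
rewrite big_nat_recr //= exprS; have := IH (ltnW lt_kR); have := step k lt_kR.
set S := \sum_(1 <= i < k.+1) e i => step_k IH_k.
have : (1 - q) * ((1 - q) ^+ k - S) <= (1 - q) * a k by apply: ler_wpM2l; lra.
have : (1 - q) * S <= S by rewrite ler_piMl //; lra.
lra.
Qed.

Section BadRate.
Variable F : finFieldType.

Lemma bad_rate_ge0 : 0 <= bad_rate F.
Proof.
rewrite /bad_rate; case: ifP => _; first exact: lexx.
by case: ifP => _; rewrite divr_ge0 ?ler0n.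
Qed.

Lemma bad_rate_le1 : bad_rate F <= 1.
Proof.
rewrite /bad_rate; case: ifP => n_neq2; first lra.
case: ifP => n_neq3; first lra.
move: n_neq2 n_neq3 (card_field_ge2 F) => /eqP ? /eqP ? ?.
by rewrite ler_pdivrMr ?mul1r ?ler_nat ?ltr0n; lia.
Qed.

(* The rate [1 - 4 / n] of the theorem is dominated by [1 - bad_rate]; for
   [n <= 3] it is negative, which is why [bad_rate] is smaller there. *)
Lemma rate_pow_le (R : nat) : (1 - 4%:R / n_F F) ^+ R <= (1 - bad_rate F) ^+ R.
Proof.
rewrite n_F_card /bad_rate; have := card_field_ge2 F.
case: eqP => [-> _|_].
  apply: le_trans (ler_norm _) _.
  by rewrite normrX (_ : 1 - 4%:R / 2%:R = - 1) ?normrN ?normr1 ?expr1n //; field.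
case: eqP => [-> _|_ _]; last exact: le_refl.
apply: le_trans (ler_norm _) _; rewrite normrX.
rewrite (_ : 1 - 4%:R / 3%:R = - (1 / 3%:R)); last by field.
rewrite normrN ger0_norm; last by rewrite divr_ge0 ?ler0n.
by apply: lerXn2r; rewrite ?nnegrE; lra.
Qed.
End BadRate.

Section WalkProbability.
Variables (F : finFieldType) (H : {set F}) (m R d : nat) (rho : rat).
Variables (f : 'rV[F]_m -> F) (x h0 h0' : 'rV[F]_m).
Local Notation W := {ffun 'I_R -> choice_t F m}.
Local Notation Om := (Omega m H R).
Local Notation Pr := (@Pr F m H R).
Local Notation all_F := (all_F d rho f x h0 h0').
Local Notation Eev := (Eev d rho f x h0 h0').
Local Notation walk_at := (walk_at x h0 h0').
Hypothesis H0 : inHm H (0 : 'rV[F]_m).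

Lemma Omega_gt0 : 0 < #|Om|%:R :> rat.
Proof.
by rewrite ltr0n; apply/card_gt0P; exists [ffun=> choice_dflt F m]; rewrite inE;
  apply/forallP => j; rewrite ffunE.
Qed.

Lemma Pr_all_F0 : Pr (all_F 0) = 1.
Proof.
rewrite /Defs.Pr (_ : [set w in Om | all_F 0 w] = Om) ?divff ?gt_eqF ?Omega_gt0 //.
apply/setP => w; rewrite inE (_ : all_F 0 w = true) ?andbT //.
by apply/forallP => -[].
Qed.

(* One step of the walk in terms of probabilities, using that [F_(k+1)] and
   [E_(k+1)] partition the event that [l_(k+1)] is dense. *)
Lemma Pr_step (k : 'I_R) (q : rat) :
  (forall w a h h', w \in Om -> all_F k w -> walk_at w k = (a, h, h') ->
     \sum_c4 indR ((next_line_count f a h h' c4)%:R < 2 * rho * n_F F)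
     <= q * #|F|%:R ^+ 4) ->
  (1 - q) * Pr (all_F k) - Pr (fun w => all_F k w && Eev w k.+1) <= Pr (all_F k.+1).
Proof.
move=> bad_le; have := count_step H0 bad_le.
have -> : #|[set w in Om | all_F k w && dense_line rho f x h0 h0' w k.+1]|%:R
  = #|[set w in Om | all_F k.+1 w]|%:R + #|[set w in Om | all_F k w && Eev w k.+1]|%:R :> rat.
  rewrite !card_set_sum -big_split /=; apply: eq_bigr => w _.
  by rewrite all_FS !andbA F_E_partition.
have inv_gt0 : 0 < #|Om|%:R^-1 :> rat by rewrite invr_gt0 Omega_gt0.
rewrite /Defs.Pr -(ler_pM2r inv_gt0) !mulrDl -!mulrA; lra.
Qed.
End WalkProbability.

(* Every state reached under [F_1 /\ ... /\ F_k] is dense: [P_0] by the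
   distance hypothesis, [P_k] for [k >= 1] by [F_k]. *)
Lemma dense_state (F : finFieldType) (m R d : nat) (rho : rat) (f : 'rV[F]_m -> F)
    (x h0 h0' : 'rV[F]_m) (w : {ffun 'I_R -> choice_t F m}) (k : nat) :
  f x != 0 -> rho <= 1 / 8 ->
  distA_RM_lt [set (0, 0)] (plane_restr f x h0 h0') d rho ->
  all_F d rho f x h0 h0' k w ->
  let: (a, h, h') := walk_at x h0 h0' w k in
  dense_bound #|F|%:R d%:R rho (Nplane f a h h')%:R.
Proof.
case: k => [|k] fx_neq0 rho_le dist_P0; first by move=> _; exact: dense_start.
rewrite all_FS => /andP [_ /Fev_dense].
by case: (walk_at x h0 h0' w k.+1) => [[a h] h'].
Qed.

(* The theorem: with [q = bad_rate], every reachable state is dense, so each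
   step loses at most a proportion [q] plus [eps_(i+1)]; unroll, and compare
   [1 - 4 / n] with [1 - q]. *)
Theorem mainTheorem6 (F : finFieldType) (H : {set F}) (m : nat)
  (d : nat) (rho : rat) (f : 'rV[F]_m -> F) (x : 'rV[F]_m) (R : nat)
  (h0 h0' : 'rV[F]_m) :
  ext_degree H m ->
  (d < #|[set: F]|)%N ->
  3%:R / 4%:R <= delta_of F d ->
  0 < rho -> rho <= delta_of F d / 8%:R ->
  f x != 0 ->
  (1 <= R)%N ->
  inHm H h0 -> inHm H h0' ->
  distA_RM_lt [set (0, 0)] (plane_restr f x h0 h0') d rho ->
  Pr H (fun w : {ffun 'I_R -> choice_t F m} =>
          [forall j : 'I_R, Fev d rho f x h0 h0' w j.+1])
  >= (1 - 4%:R / n_F F) ^+ R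
     - \sum_(1 <= i < R.+1)
         Pr H (fun w : {ffun 'I_R -> choice_t F m} =>
                 [forall j : 'I_i.-1, Fev d rho f x h0 h0' w j.+1]
                 && Eev d rho f x h0 h0' w i).
Proof.
move=> ext _ delta_ge rho_gt0 rho_le fx_neq0 _ _ _ dist_P0.
have H0 : inHm H (0 : 'rV[F]_m).
  by apply/forallP => j; rewrite mxE; apply: subfield0; case: ext.
have rho_le8 : rho <= 1 / 8.
  have [_ rho_n_le] := delta_bounds delta_ge rho_le.
  have n_gt0 : 0 < #|F|%:R :> rat := card_field_gt0 F rat.
  by rewrite -(ler_pM2r n_gt0); move: (ler0n rat d); lra.
have bad_le k w a h h' : w \in Omega m H R -> all_F d rho f x h0 h0' k w ->
    walk_at x h0 h0' w k = (a, h, h') ->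
    \sum_c4 indR ((next_line_count f a h h' c4)%:R < 2 * rho * n_F F)
    <= bad_rate F * #|F|%:R ^+ 4.
  move=> _ Aw state_k; have := dense_state fx_neq0 rho_le8 dist_P0 Aw.
  by rewrite state_k; exact: bad_lines_bound ext delta_ge rho_gt0 rho_le.
apply: le_trans (lerD (rate_pow_le F R) (lexx _)) _.
apply: (unroll_recursion (a := fun k => Pr H (@all_F F m R d rho f x h0 h0' k))).
- by rewrite bad_rate_ge0 bad_rate_le1.
- exact: Pr_all_F0.
- by move=> i; rewrite /Pr divr_ge0 ?ler0n.
- by move=> k lt_kR; exact: (Pr_step H0 (k := Ordinal lt_kR) (bad_le k)).
Qed.
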